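(* Let $\mathcal{X}\subseteq\mathbb{R}^d$ be closed and convex, $\mu,\sigma,\epsilon,\delta>0$. Let $h:\mathcal{X}\to\mathbb{R}$ be continuously differentiable with $D_h(x,y)\ge\frac\sigma2\|x-y\|^2$ for all $x,y$, and let $f:\mathcal{X}\to\mathbb{R}$ be differentiable with $(1/\epsilon)$-Lipschitz gradient, $\mu$-uniformly convex with respect to $h$ (i.e. $D_f(x,y)\ge\mu D_h(x,y)$ for all $x,y$), with minimizer $x^\ast$. Let $(A_k)_{k\ge0}$ be a nondecreasing sequence of positive numbers, $\alpha_k=A_{k+1}-A_k$, $\tau_k=\alpha_k/A_{k+1}$, and $E_k=A_k\big(\mu D_h(x^\ast,z_k)+f(y_k)-f(x^\ast)\big)$. Suppose sequences $(x_k),(y_k),(z_k)$ in $\mathcal{X}$ satisfy, for all $k$, $$x_k=\frac{\tau_k}{1+\tau_k}z_k+\frac1{1+\tau_k}y_k,\qquad \nabla h(z_{k+1})-\nabla h(z_k)=\tau_k\Big(\nabla h(x_k)-\nabla h(z_k)-\frac1\mu\nabla f(x_k)\Big),$$ with $y_{k+1}\in\mathcal{X}$ arbitrary. Then $\frac{E_{k+1}-E_k}{\delta}\le\varepsilon_{k+1}$, where $$\varepsilon_{k+1}=\frac{A_{k+1}}{\delta}\big(f(y_{k+1})-f(x_k)\big)+\frac{A_{k+1}}{\delta}\Big(\frac{\tau_k}{2\epsilon}-\frac{\sigma\mu}{2\tau_k}\Big)\|x_k-y_k\|^2-\frac{A_{k+1}\mu\sigma}{2\delta}\|x_k-y_k\|^2+\frac{\alpha_k}{\delta}\langle\nabla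 f(x_k),y_k-x_k\rangle+\frac{A_{k+1}\mu}{2\sigma\delta}\Big\|\tau_k\Big(\nabla h(x_k)-\nabla h(z_k)-\frac1\mu\nabla f(x_k)\Big)\Big\|^2.$$ When $\mathcal{X}=\mathbb{R}^d$ and $h=\frac12\|\cdot\|^2$, this becomes $$\varepsilon_{k+1}=\frac{A_{k+1}}{\delta}\Big(f(y_{k+1})-f(x_k)+\frac{\tau_k^2}{2\mu}\|\nabla f(x_k)\|^2+\Big(\frac{\tau_k}{2\epsilon}-\frac{\mu}{2\tau_k}\Big)\|x_k-y_k\|^2\Big).$$
   Context: $\|\cdot\|$ is the Euclidean norm; for differentiable $g$, $D_g(y,x)=g(y)-g(x)-\langle\nabla g(x),y-x\rangle$. *)

From HB Require Import structures.
From mathcomp Require Import all_boot all_order all_algebra.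
From mathcomp Require Import all_classical all_reals all_analysis.
Set Implicit Arguments. Unset Strict Implicit. Unset Printing Implicit Defensive.
Import Order.TTheory GRing.Theory Num.Theory.
Import numFieldNormedType.Exports.
Local Open Scope ring_scope.
Local Open Scope classical_set_scope.

Section Defs.
Variables (R : realType) (d : nat).

Definition dotp (u v : 'rV[R]_d) : R := \sum_(i < d) u ord0 i * v ord0 i.
Definition enorm (u : 'rV[R]_d) : R := Num.sqrt (dotp u u).

Definition has_grad (f : 'rV[R]_d -> R) (g : 'rV[R]_d -> 'rV[R]_d)
  (x : 'rV[R]_d) : Prop :=
  differentiable f x /\ forall v, 'd f x v = dotp (g x) v.

Definition bregman (f : 'rV[R]_d -> R) (g : 'rV[R]_d -> 'rV[R]_d)
  (y x : 'rV[R]_d) : R := f y - f x - dotp (g x) (y - x).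

End Defs.

From HB Require Import structures.
From mathcomp Require Import all_boot all_order all_algebra.
From mathcomp Require Import all_classical all_reals all_analysis.
From mathcomp Require Import ring lra.
Import Order.TTheory GRing.Theory Num.Theory.
Import numFieldNormedType.Exports.
Local Open Scope ring_scope.
Local Open Scope classical_set_scope.

(* Since A_k = (1 - tau_k) A_{k+1}, dividing
   E_{k+1} - E_k by A_{k+1} leaves a mirror-descent part and a function-value
   part.  The three-point identity for D_h and sigma-strong convexity of h
   bound D_h(x*, z_{k+1}) - D_h(x*, z_k) by a linear term plus
   |grad h(z_{k+1}) - grad h(z_k)|^2 / (2 sigma) (Young's inequality); the
   linear term is again rewritten by the three-point identity and estimated
   by uniform convexity of f at (x*, x_k).  Uniform convexity at (y_k, x_k)
   and the coupling y_k - x_k = tau_k (x_k - z_k) produce the remaining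
   quadratic terms, and Lipschitz continuity of grad f gives mu sigma <= 1/eps.  For h = |.|^2 / 2 strong convexity forces
   grad h = id, and the error term simplifies by completing the square. *)

Section InnerProduct.
Context {R : realType} {d : nat}.
Implicit Types (a b u v w : 'rV[R]_d) (c s L : R).

Lemma dotpDl u v w : dotp (u + v) w = dotp u w + dotp v w.
Proof. by rewrite /dotp -big_split; apply: eq_bigr => i _; rewrite mxE mulrDl. Qed.

Lemma dotpZl c u w : dotp (c *: u) w = c * dotp u w.
Proof. by rewrite /dotp mulr_sumr; apply: eq_bigr => i _; rewrite mxE mulrA. Qed.

Lemma dotpNl u w : dotp (- u) w = - dotp u w.
Proof. by rewrite -scaleN1r dotpZl mulN1r. Qed.

Lemma dotpC u w : dotp u w = dotp w u.
Proof. by apply: eq_bigr => i _; rewrite mulrC. Qed.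

Lemma dotpDr u v w : dotp w (u + v) = dotp w u + dotp w v.
Proof. by rewrite dotpC dotpDl !(dotpC w). Qed.

Lemma dotpZr c u w : dotp w (c *: u) = c * dotp w u.
Proof. by rewrite dotpC dotpZl (dotpC w). Qed.

Lemma dotpNr u w : dotp w (- u) = - dotp w u.
Proof. by rewrite dotpC dotpNl (dotpC w). Qed.

Definition dotpE := (dotpDl, dotpDr, dotpNl, dotpNr, dotpZl, dotpZr).

Lemma dotp_ge0 u : 0 <= dotp u u.
Proof. by apply: sumr_ge0 => i _; rewrite -expr2 sqr_ge0. Qed.

Lemma dotp_eq0 u : dotp u u = 0 -> u = 0.
Proof.
move=> uu0; apply/rowP => j; rewrite mxE.
have /eqP := psumr_eq0P (fun i _ => sqr_ge0 (u ord0 i)) uu0 (i := j) isT.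
by rewrite mulf_eq0 orbb => /eqP; rewrite (ord1 (ord0 : 'I_1)).
Qed.

Lemma sqr_enorm u : enorm u ^+ 2 = dotp u u.
Proof. by rewrite sqr_sqrtr // dotp_ge0. Qed.

Lemma sqr_enormZ c u : enorm (c *: u) ^+ 2 = c ^+ 2 * enorm u ^+ 2.
Proof. by rewrite !sqr_enorm dotpZl dotpZr mulrA -expr2. Qed.

Lemma enorm_ge0 u : 0 <= enorm u.
Proof. exact: sqrtr_ge0. Qed.

Lemma enormBC u v : enorm (u - v) = enorm (v - u).
Proof. by rewrite -opprB /enorm dotpNl dotpNr opprK. Qed.

Lemma dotp_young a b s : 0 < s ->
  dotp a b <= enorm a ^+ 2 / (2 * s) + s / 2 * enorm b ^+ 2.
Proof.
move=> s_gt0; have := dotp_ge0 (a - s *: b).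
rewrite !dotpE (dotpC b a) !sqr_enorm.
have -> : dotp a a / (2 * s) + s / 2 * dotp b b
        = (dotp a a + s ^+ 2 * dotp b b) / (2 * s) by field; lra.
rewrite ler_pdivlMr ?mulr_gt0 //; lra.
Qed.

Lemma dotp_lipschitz_le {a b L} : 0 < L ->
  enorm a <= L * enorm b -> dotp a b <= L * enorm b ^+ 2.
Proof.
move=> L_gt0 le_ab; have := dotp_young a b L L_gt0.
have : enorm a ^+ 2 / (2 * L) <= L / 2 * enorm b ^+ 2.
  rewrite ler_pdivrMr ?mulr_gt0 //.
  have -> : L / 2 * enorm b ^+ 2 * (2 * L) = (L * enorm b) ^+ 2 by field; lra.
  by rewrite lerXn2r // ?nnegrE ?enorm_ge0 // mulr_ge0 ?enorm_ge0 ?ltW.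
lra.
Qed.

Lemma sub_coupling (x y z : 'rV[R]_d) (t : R) : 0 <= t ->
  x = (t / (1 + t)) *: z + (1 + t)^-1 *: y -> y - x = t *: (x - z).
Proof. by move=> t_ge0 ->; apply/rowP => j; rewrite !mxE; field; lra. Qed.

End InnerProduct.

Section Bregman.
Context {R : realType} {d : nat}.
Variables (h : 'rV[R]_d -> R) (gh : 'rV[R]_d -> 'rV[R]_d).
Implicit Types (u v w z : 'rV[R]_d).

Lemma bregman_sum u v :
  bregman h gh u v + bregman h gh v u = dotp (gh u - gh v) (u - v).
Proof. rewrite /bregman !dotpE (dotpC (gh u) v); ring. Qed.

Lemma bregman_three_point w z (z' : 'rV[R]_d) :
  bregman h gh w z' + bregman h gh z' z - bregman h gh w z
  = dotp (gh z - gh z') (w - z').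
Proof. rewrite /bregman !dotpE; ring. Qed.

Lemma bregman_mirror_step w {s : R} {z z' : 'rV[R]_d} : 0 < s ->
  s / 2 * enorm (z' - z) ^+ 2 <= bregman h gh z' z ->
  bregman h gh w z' - bregman h gh w z
  <= dotp (gh z' - gh z) (z - w) + enorm (gh z' - gh z) ^+ 2 / (2 * s).
Proof.
move=> s_gt0 strong.
have young := dotp_young (gh z' - gh z) (z' - z) s s_gt0.
have := bregman_three_point w z z'.
have -> : dotp (gh z - gh z') (w - z')
        = dotp (gh z' - gh z) (z - w) + dotp (gh z' - gh z) (z' - z).
  by rewrite !dotpE; ring.
lra.
Qed.

Lemma half_sqr_enorm_grad :
  (forall u, h u = enorm u ^+ 2 / 2) ->
  (forall u v, 1 / 2 * enorm (u - v) ^+ 2 <= bregman h gh u v) ->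
  forall v, gh v = v.
Proof.
move=> h_half strong v; apply/subr0_eq/dotp_eq0/le_anti; rewrite dotp_ge0 andbT.
have := strong (gh v) v.
rewrite /bregman !h_half !sqr_enorm !dotpE (dotpC v (gh v)); lra.
Qed.

End Bregman.

Section UniformlyConvex.
Context {R : realType} {d : nat}.
Context {X : set 'rV[R]_d} {h f : 'rV[R]_d -> R} {gh gf : 'rV[R]_d -> 'rV[R]_d}.
Context {mu sigma L : R}.
Hypotheses (mu_gt0 : 0 < mu) (sigma_gt0 : 0 < sigma) (L_gt0 : 0 < L).
Hypothesis h_strong : forall u v, X u -> X v ->
  sigma / 2 * enorm (u - v) ^+ 2 <= bregman h gh u v.
Hypothesis f_uniform : forall u v, X u -> X v ->
  mu * bregman h gh u v <= bregman f gf u v.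
Hypothesis gf_lipschitz : forall u v, X u -> X v ->
  enorm (gf u - gf v) <= L * enorm (u - v).

Lemma bregman_f_ge {u v} : X u -> X v ->
  mu * sigma / 2 * enorm (u - v) ^+ 2 <= bregman f gf u v.
Proof.
move=> Xu Xv; apply: le_trans _ (f_uniform _ _ Xu Xv); rewrite -!mulrA.
by apply: ler_wpM2l; [exact: ltW | rewrite mulrA; exact: h_strong].
Qed.

Lemma mu_sigma_le_lipschitz {u v} : X u -> X v ->
  mu * sigma * enorm (u - v) ^+ 2 <= L * enorm (u - v) ^+ 2.
Proof.
move=> Xu Xv; have := bregman_sum f gf u v.
have := dotp_lipschitz_le L_gt0 (gf_lipschitz _ _ Xu Xv).
have := bregman_f_ge Xu Xv; have := bregman_f_ge Xv Xu.
rewrite enormBC; lra.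
Qed.

Lemma potential_step_le {w x y z y' z' : 'rV[R]_d} {t : R} :
  X w -> X x -> X y -> X z -> X z' -> 0 <= t -> t <= 1 ->
  y - x = t *: (x - z) ->
  gh z' - gh z = t *: (gh x - gh z - mu^-1 *: gf x) ->
  mu * bregman h gh w z' + f y' - f w
    - (1 - t) * (mu * bregman h gh w z + f y - f w)
  <= f y' - f x + (t * L / 2 - sigma * mu / (2 * t)) * enorm (x - y) ^+ 2
     - mu * sigma / 2 * enorm (x - y) ^+ 2 + t * dotp (gf x) (y - x)
     + mu / (2 * sigma) * enorm (t *: (gh x - gh z - mu^-1 *: gf x)) ^+ 2.
Proof.
move=> Xw Xx Xy Xz Xz' t_ge0 t_le1 yx step.
have mirror := bregman_mirror_step h gh w sigma_gt0 (h_strong _ _ Xz' Xz).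
rewrite step in mirror.
have linear : mu * dotp (t *: (gh x - gh z - mu^-1 *: gf x)) (z - w)
    = - (mu * t) * (bregman h gh w z + bregman h gh z x - bregman h gh w x)
      + t * dotp (gf x) (w - x) + dotp (gf x) (y - x).
  rewrite bregman_three_point yx !dotpE; field; exact: lt0r_neq0.
have f_wx : mu * bregman h gh w x <= f w - f x - dotp (gf x) (w - x).
  exact: f_uniform.
have f_yx : mu * sigma / 2 * enorm (x - y) ^+ 2
    <= f y - f x - dotp (gf x) (y - x).
  by rewrite enormBC; apply: bregman_f_ge.
have h_zx := h_strong _ _ Xz Xx.
have mu_sigma_le := mu_sigma_le_lipschitz Xx Xy.
(* at t = 0 both sides vanish: x = y, and the junk value 0^-1 is 0 *)
have coupling : sigma * mu / (2 * t) * enorm (x - y) ^+ 2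
    = t * mu * (sigma / 2 * enorm (z - x) ^+ 2).
  have -> : x - y = t *: (z - x) by rewrite -opprB yx -scalerN opprB.
  rewrite sqr_enormZ; have [->|t_neq0] := eqVneq t 0.
    by rewrite !(mul0r, mulr0, invr0).
  by field; rewrite t_neq0.
have one_sub_t_ge0 : 0 <= 1 - t by rewrite subr_ge0.
have := ler_wpM2l (ltW mu_gt0) mirror.
have := ler_wpM2l t_ge0 f_wx.
have := ler_wpM2l one_sub_t_ge0 f_yx.
have := ler_wpM2l (mulr_ge0 t_ge0 (ltW mu_gt0)) h_zx.
have := ler_wpM2l (divr_ge0 t_ge0 (ler0n _ 2)) mu_sigma_le.
lra.
Qed.

End UniformlyConvex.

Theorem proposition7 (R : realType) (d : nat) (X : set 'rV[R]_d)
  (mu sigma eps delta : R)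
  (h f : 'rV[R]_d -> R) (gh gf : 'rV[R]_d -> 'rV[R]_d) (xstar : 'rV[R]_d)
  (A : nat -> R) (x y z : nat -> 'rV[R]_d) :
  closed X -> convex_set X ->
  0 < mu -> 0 < sigma -> 0 < eps -> 0 < delta ->
  (* h continuously differentiable on X, sigma-strongly convex (Bregman) *)
  (forall u, X u -> has_grad h gh u) -> {within X, continuous gh} ->
  (forall u v, X u -> X v ->
     bregman h gh u v >= sigma / 2 * enorm (u - v) ^+ 2) ->
  (* f differentiable on X with (1/eps)-Lipschitz gradient *)
  (forall u, X u -> has_grad f gf u) ->
  (forall u v, X u -> X v -> enorm (gf u - gf v) <= eps^-1 * enorm (u - v)) ->
  (* f is mu-uniformly convex w.r.t. h *)
  (forall u v, X u -> X v -> bregman f gf u v >= mu * bregman h gh u v) ->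
  (* xstar is a minimizer of f on X *)
  X xstar -> (forall u, X u -> f xstar <= f u) ->
  (* (A_k) positive, nondecreasing *)
  (forall k, 0 < A k) -> (forall k, A k <= A k.+1) ->
  (forall k, X (x k)) -> (forall k, X (y k)) -> (forall k, X (z k)) ->
  let alpha k := A k.+1 - A k in
  let tau k := alpha k / A k.+1 in
  let E k := A k * (mu * bregman h gh xstar (z k) + f (y k) - f xstar) in
  (forall k, x k = (tau k / (1 + tau k)) *: z k + (1 + tau k)^-1 *: y k) ->
  (forall k, gh (z k.+1) - gh (z k) =
     tau k *: (gh (x k) - gh (z k) - mu^-1 *: gf (x k))) ->
  let epsk k := (* epsilon_{k+1} *)
    A k.+1 / delta * (f (y k.+1) - f (x k))
    + A k.+1 / delta * (tau k / (2 * eps) - sigma * mu / (2 * tau k))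
        * enorm (x k - y k) ^+ 2
    - A k.+1 * mu * sigma / (2 * delta) * enorm (x k - y k) ^+ 2
    + alpha k / delta * dotp (gf (x k)) (y k - x k)
    + A k.+1 * mu / (2 * sigma * delta)
        * enorm (tau k *: (gh (x k) - gh (z k) - mu^-1 *: gf (x k))) ^+ 2 in
  (forall k, (E k.+1 - E k) / delta <= epsk k) /\
  (* special case X = R^d, h = 1/2 ||.||^2 (so sigma = 1) *)
  (X = setT -> (forall u, h u = enorm u ^+ 2 / 2) -> sigma = 1 ->
   forall k, epsk k =
     A k.+1 / delta * (f (y k.+1) - f (x k)
       + tau k ^+ 2 / (2 * mu) * enorm (gf (x k)) ^+ 2
       + (tau k / (2 * eps) - mu / (2 * tau k)) * enorm (x k - y k) ^+ 2)).
Proof.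
move=> _ _ mu_gt0 sigma_gt0 eps_gt0 delta_gt0 _ _ h_strong _ gf_lipschitz
  f_uniform X_xstar _ A_gt0 A_le X_x X_y X_z alpha tau E x_def z_step epsk.
have alphaE k : alpha k = A k.+1 * tau k by rewrite /tau mulrC divfK ?gt_eqF.
have tau_ge0 k : 0 <= tau k by apply: divr_ge0; rewrite ?subr_ge0 // ltW.
have tau_le1 k : tau k <= 1.
  by rewrite ler_pdivrMr // mul1r /alpha gerBl ltW.
have A_prev k : A k = A k.+1 * (1 - tau k) by rewrite mulrBr mulr1 -alphaE /alpha; ring.
have y_sub k : y k - x k = tau k *: (x k - z k) by apply: sub_coupling (x_def k).
split=> [k | X_setT h_half sigma1 k].
- have eps_inv_gt0 : 0 < eps^-1 by rewrite invr_gt0.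
  have step := potential_step_le mu_gt0 sigma_gt0 eps_inv_gt0
    h_strong f_uniform gf_lipschitz (y' := y k.+1) X_xstar (X_x k) (X_y k)
    (X_z k) (X_z k.+1) (tau_ge0 k) (tau_le1 k) (y_sub k) (z_step k).
  rewrite ler_pdivrMr // /E (A_prev k) -mulrA -mulrBr.
  apply: le_trans (ler_wpM2l (ltW (A_gt0 k.+1)) step) _.
  rewrite le_eqVlt; apply/predU1l.
  rewrite /epsk alphaE; move: (sigma * mu / (2 * tau k)) => c.
  by field; rewrite !gt_eqF.
- have h_strong1 u v : 1 / 2 * enorm (u - v) ^+ 2 <= bregman h gh u v.
    by rewrite -{1}sigma1; apply: h_strong; rewrite X_setT.
  have gh_id := half_sqr_enorm_grad h gh h_half h_strong1.
  rewrite /epsk alphaE !gh_id sigma1 mul1r enormBC y_sub.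
  move: (x k - z k) (gf (x k)) (mu / (2 * tau k)) => a p c.
  rewrite !sqr_enorm !dotpE (dotpC a p).
  by field; rewrite !gt_eqF.
Qed.
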